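(* Let $p\le q$ be positive integers. The complete bipartite graph $K_{p,q}$ is a TRVG if and only if $p\le 2$ or $(p,q)\in\{(3,3),(3,4)\}$.
   Context: A graph $G$ is a transparent rectangle visibility graph (TRVG) if its vertices can be represented by a collection of pairwise non-overlapping rectangles in the plane whose sides are parallel to the coordinate axes, one per vertex, such that two distinct vertices are adjacent if and only if there is a horizontal or a vertical line intersecting the interiors of both of their rectangles (other rectangles do not block visibility). *)

From Stdlib Require Import Reals.
From mathcomp Require Import all_boot.
Set Implicit Arguments. Unset Strict Implicit. Unset Printing Implicit Defensive.

Local Open Scope R_scope.

Record rect := Rect { xl : R; xr : R; yl : R; yr : R }.

Definition rect_ok (a : rect) : Prop := xl a < xr a /\ yl a < yr a.

Definition in_interior (a : rect) (x y : R) : Prop :=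
  xl a < x < xr a /\ yl a < y < yr a.

Definition non_overlapping (a b : rect) : Prop :=
  ~ (exists x y, in_interior a x y /\ in_interior b x y).

Definition hvis (a b : rect) : Prop :=
  exists c, (exists x, in_interior a x c) /\ (exists x, in_interior b x c).

Definition vvis (a b : rect) : Prop :=
  exists c, (exists y, in_interior a c y) /\ (exists y, in_interior b c y).

Definition TRVG (V : finType) (E : rel V) : Prop :=
  exists r : V -> rect,
    (forall v, rect_ok (r v)) /\
    (forall u v, u <> v -> non_overlapping (r u) (r v)) /\
    (forall u v, u <> v -> (E u v <-> hvis (r u) (r v) \/ vvis (r u) (r v))).

Definition Kpq_rel (p q : nat) : rel ('I_p + 'I_q)%type :=
  fun u v => match u, v with
             | inl _, inr _ => true
             | inr _, inl _ => true
             | _, _ => false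
             end.
Arguments Kpq_rel : clear implicits.

(** In a representation of K_{p,q}, the rectangles of one side are pairwise
    invisible, so their x-projections are pairwise disjoint open intervals,
    and so are their y-projections.  Every edge is realised by overlapping
    x-projections or overlapping y-projections.  But between two families of
    pairwise disjoint intervals, of sizes p and q, at most p + q - 1 pairs
    overlap: sending an overlapping pair to the interval that ends first is
    injective and misses the interval that ends last.  Hence
    pq <= 2(p + q - 1), i.e. (p - 2)(q - 2) <= 2, which for 3 <= p <= q
    leaves only (3,3) and (3,4).  Conversely K_{2,q} and K_{3,4} have explicit
    representations, and TRVGs are closed under induced subgraphs. *)

From Stdlib Require Import Reals Lra Classical.
From mathcomp Require Import all_boot zify.

Set Implicit Arguments.
Unset Strict Implicit.
Unset Printing Implicit Defensive.

Local Open Scope R_scope.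

Definition intervals_meet (l1 h1 l2 h2 : R) : Prop := l1 < h2 /\ l2 < h1.

Definition intervals_meet_dec (l1 h1 l2 h2 : R) :
  {intervals_meet l1 h1 l2 h2} + {~ intervals_meet l1 h1 l2 h2}.
Proof.
rewrite /intervals_meet.
case: (Rlt_dec l1 h2) => h12; case: (Rlt_dec l2 h1) => h21; by [left | right; tauto].
Defined.

Definition xmeet (a b : rect) : Prop := intervals_meet (xl a) (xr a) (xl b) (xr b).
Definition ymeet (a b : rect) : Prop := intervals_meet (yl a) (yr a) (yl b) (yr b).

Lemma intervals_meet_common_point (l1 h1 l2 h2 : R) : l1 < h1 -> l2 < h2 ->
  intervals_meet l1 h1 l2 h2 -> exists c, l1 < c < h1 /\ l2 < c < h2.
Proof.
move=> lt1 lt2 [lt12 lt21]; exists ((Rmax l1 l2 + Rmin h1 h2) / 2).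
rewrite /Rmax /Rmin; do 2!case: Rle_dec => ?; lra.
Qed.

Lemma hvis_iff_ymeet (a b : rect) : rect_ok a -> rect_ok b -> hvis a b <-> ymeet a b.
Proof.
move=> [oxa oya] [oxb oyb]; split.
- by move=> [c [[x [_ ?]] [x' [_ ?]]]]; rewrite /ymeet /intervals_meet; lra.
- move=> /(intervals_meet_common_point oya oyb) [c [ca cb]].
  by exists c; split; [exists ((xl a + xr a) / 2) | exists ((xl b + xr b) / 2)];
    split; lra.
Qed.

Lemma vvis_iff_xmeet (a b : rect) : rect_ok a -> rect_ok b -> vvis a b <-> xmeet a b.
Proof.
move=> [oxa oya] [oxb oyb]; split.
- by move=> [c [[y [? _]] [y' [? _]]]]; rewrite /xmeet /intervals_meet; lra.
- move=> /(intervals_meet_common_point oxa oxb) [c [ca cb]].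
  by exists c; split; [exists ((yl a + yr a) / 2) | exists ((yl b + yr b) / 2)];
    split; lra.
Qed.

Lemma visible_iff_meet (a b : rect) : rect_ok a -> rect_ok b ->
  hvis a b \/ vvis a b <-> xmeet a b \/ ymeet a b.
Proof. by move=> oa ob; rewrite (hvis_iff_ymeet oa ob) (vvis_iff_xmeet oa ob); tauto. Qed.

Lemma non_overlapping_of_not_meet (a b : rect) :
  ~ (xmeet a b /\ ymeet a b) -> non_overlapping a b.
Proof.
move=> nmeet [x [y [[[? ?] [? ?]] [[? ?] [? ?]]]]]; apply: nmeet.
by rewrite /xmeet /ymeet /intervals_meet; lra.
Qed.

Lemma exists_argmax (T : finType) (h : T -> R) : T -> exists m, forall k, h k <= h m.
Proof.
move=> t0; suff [m hm] : exists m, forall k, k \in enum T -> h k <= h m.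
  by exists m => k; apply: hm; rewrite mem_enum.
elim: (enum T) => [|t s [m hm]]; first by exists t0.
case: (Rle_dec (h t) (h m)) => htm; [exists m | exists t];
  move=> k; rewrite in_cons => /orP [/eqP -> | /hm]; lra.
Qed.

Section DisjointIntervalFamilies.

Variables (I J : finType) (loI hiI : I -> R) (loJ hiJ : J -> R).
Hypothesis disjointI :
  forall i i', i <> i' -> ~ intervals_meet (loI i) (hiI i) (loI i') (hiI i').
Hypothesis disjointJ :
  forall j j', j <> j' -> ~ intervals_meet (loJ j) (hiJ j) (loJ j') (hiJ j').

Lemma card_meeting_pairs_lt (i0 : I) (S : {set I * J}) :
  (forall x, x \in S -> intervals_meet (loI x.1) (hiI x.1) (loJ x.2) (hiJ x.2)) ->
  (#|S| < #|I| + #|J|)%N.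
Proof.
move=> meetS.
pose first_end (x : I * J) : I + J :=
  if Rle_dec (hiI x.1) (hiJ x.2) then inl x.1 else inr x.2.
have first_end_inj : {in S &, injective first_end}.
  move=> [i j] [i' j'] /meetS /= [? ?] /meetS /= [? ?].
  rewrite /first_end /=; case: Rle_dec => ?; case: Rle_dec => ? // [eq_end].
  - subst i'; case: (eqVneq j j') => [-> // | /eqP ne].
    by case: (disjointJ ne); split; lra.
  - subst j'; case: (eqVneq i i') => [-> // | /eqP ne].
    by case: (disjointI ne); split; lra.
pose hi (k : I + J) := match k with inl i => hiI i | inr j => hiJ j end.
have [last_end last_endP] := exists_argmax hi (inl i0).
have [z first_endNz] : exists z, forall x, x \in S -> first_end x <> z.
  case: (classic (exists j, hi last_end <= hiJ j)) => [[j hj] | no_j].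
    exists (inr j) => x _; rewrite /first_end; case: Rle_dec => // ? [ej].
    by rewrite -ej in hj; have /= := last_endP (inl x.1); lra.
  case: last_end last_endP no_j => [i | j] last_endP no_j; last first.
    by case: no_j; exists j; rewrite /=; lra.
  exists (inl i) => x _; rewrite /first_end; case: Rle_dec => // ? [eq_i].
  by apply: no_j; exists x.2; rewrite /= -eq_i.
have : first_end @: S \subset [set~ z].
  by apply/subsetP => _ /imsetP [x xS ->]; rewrite !inE; apply/eqP/first_endNz.
move/subset_leq_card; rewrite card_in_imset // cardsC1 card_sum.
have I_gt0 : (0 < #|I|)%N by apply/card_gt0P; exists i0.
by rewrite -[X in (_ < X)%N](@prednK (#|I| + #|J|)) ?ltnS ?ltn_addr.
Qed.

End DisjointIntervalFamilies.

Lemma TRVG_Kpq_bound (p q : nat) :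
  (0 < p)%N -> TRVG (Kpq_rel p q) -> (p * q + 2 <= 2 * (p + q))%N.
Proof.
move=> p_gt0 [r [r_ok [_ r_adj]]].
have adj_meet u v : u <> v -> Kpq_rel p q u v <-> xmeet (r u) (r v) \/ ymeet (r u) (r v).
  by move=> ne; rewrite r_adj // visible_iff_meet.
have non_adj u v : u <> v -> ~~ Kpq_rel p q u v ->
    ~ xmeet (r u) (r v) /\ ~ ymeet (r u) (r v).
  by move=> ne /negP nE; split=> meet; apply/nE/(adj_meet _ _ ne); [left | right].
have sideA i i' : i <> i' ->
    ~ xmeet (r (inl i)) (r (inl i')) /\ ~ ymeet (r (inl i)) (r (inl i')).
  by move=> ne; apply: non_adj => // -[/ne].
have sideB j j' : j <> j' ->
    ~ xmeet (r (inr j)) (r (inr j')) /\ ~ ymeet (r (inr j)) (r (inr j')).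
  by move=> ne; apply: non_adj => // -[/ne].
pose SX := [set x : 'I_p * 'I_q | intervals_meet_dec
              (xl (r (inl x.1))) (xr (r (inl x.1))) (xl (r (inr x.2))) (xr (r (inr x.2)))].
have cardSX : (#|SX| < #|'I_p| + #|'I_q|)%N.
  apply: (@card_meeting_pairs_lt _ _ (fun i => xl (r (inl i))) (fun i => xr (r (inl i)))
            (fun j => xl (r (inr j))) (fun j => xr (r (inr j)))) (Ordinal p_gt0) _ _.
  - by move=> i i' /sideA [].
  - by move=> j j' /sideB [].
  - by move=> x; rewrite inE => /sumboolP.
have cardSY : (#|~: SX| < #|'I_p| + #|'I_q|)%N.
  apply: (@card_meeting_pairs_lt _ _ (fun i => yl (r (inl i))) (fun i => yr (r (inl i)))
            (fun j => yl (r (inr j))) (fun j => yr (r (inr j)))) (Ordinal p_gt0) _ _.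
  - by move=> i i' /sideA [].
  - by move=> j j' /sideB [].
  - move=> [i j]; rewrite !inE => /sumboolP nx.
    by have [/(_ isT) [] //] := adj_meet (inl i) (inr j) ltac:(by []).
have := cardsC SX; rewrite card_prod !card_ord in cardSX cardSY *; lia.
Qed.

Lemma TRVG_of_rects (V : finType) (E : rel V) (r : V -> rect) :
  (forall v, rect_ok (r v)) ->
  (forall u v, u <> v -> ~ (xmeet (r u) (r v) /\ ymeet (r u) (r v))) ->
  (forall u v, u <> v -> E u v <-> xmeet (r u) (r v) \/ ymeet (r u) (r v)) ->
  TRVG E.
Proof.
move=> r_ok r_sep r_adj; exists r; split=> //; split=> u v ne.
- exact/non_overlapping_of_not_meet/r_sep.
- by rewrite r_adj // visible_iff_meet.
Qed.

Lemma TRVG_induced (V W : finType) (E : rel V) (F : rel W) (f : W -> V) :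
  injective f -> (forall u v, F u v = E (f u) (f v)) -> TRVG E -> TRVG F.
Proof.
move=> f_inj Ef [r [r_ok [r_sep r_adj]]]; exists (r \o f).
split=> [v | ]; first exact: r_ok.
split=> u v ne; first by apply: r_sep => /f_inj.
by rewrite Ef; apply: r_adj => /f_inj.
Qed.

Lemma TRVG_Kpq_le (p q p' q' : nat) : (p' <= p)%N -> (q' <= q)%N ->
  TRVG (Kpq_rel p q) -> TRVG (Kpq_rel p' q').
Proof.
move=> le_p le_q; apply: (TRVG_induced (f := fun v => match v with
  | inl i => inl (widen_ord le_p i) | inr j => inr (widen_ord le_q j) end)).
- by move=> [i|j] [i'|j'] // [/ord_inj ->].
- by move=> [i|j] [i'|j'].
Qed.

Lemma INR_ltP (m n : nat) : reflect (INR m < INR n) (m < n)%N.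
Proof. by apply: (iffP ltP) => [/lt_INR | /INR_lt]. Qed.

Lemma intervals_meet_INR (a b c d : nat) :
  intervals_meet (INR a) (INR b) (INR c) (INR d) <-> ((a < d) && (c < b))%N.
Proof. by split=> [[/INR_ltP -> /INR_ltP ->] | /andP [/INR_ltP ? /INR_ltP ?]]. Qed.

Local Close Scope R_scope.

Record grid_rect := GridRect { gxl : nat; gxr : nat; gyl : nat; gyr : nat }.

Definition grid_to_rect (g : grid_rect) : rect :=
  Rect (INR (gxl g)) (INR (gxr g)) (INR (gyl g)) (INR (gyr g)).

Definition grid_ok (g : grid_rect) : bool := (gxl g < gxr g) && (gyl g < gyr g).
Definition grid_xmeet (g h : grid_rect) : bool := (gxl g < gxr h) && (gxl h < gxr g).
Definition grid_ymeet (g h : grid_rect) : bool := (gyl g < gyr h) && (gyl h < gyr g).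

Definition grid_pair_ok (e : bool) (g h : grid_rect) : bool :=
  ~~ (grid_xmeet g h && grid_ymeet g h) && (e == grid_xmeet g h || grid_ymeet g h).

Lemma TRVG_of_grid (V : finType) (E : rel V) (g : V -> grid_rect) :
  (forall v, grid_ok (g v)) ->
  (forall u v, u != v -> grid_pair_ok (E u v) (g u) (g v)) ->
  TRVG E.
Proof.
move=> g_ok g_pair; apply: (TRVG_of_rects (r := grid_to_rect \o g)).
- by move=> v; have /andP [/INR_ltP ? /INR_ltP ?] := g_ok v.
- move=> u v /eqP /g_pair /andP [/negP nmeet _] [/intervals_meet_INR ? /intervals_meet_INR ?].
  exact/nmeet/andP.
- move=> u v /eqP /g_pair /andP [_ /eqP ->] /=.
  rewrite /xmeet /ymeet /= !intervals_meet_INR.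
  by split=> [/orP | ?]; [| apply/orP].
Qed.

(* The staircase of unit squares [inr j] sees the horizontal bar [inl 0]
   vertically and the vertical bar [inl 1] horizontally; no two steps see
   each other. *)
Definition K2q_grid (q : nat) (v : 'I_2 + 'I_q) : grid_rect :=
  match v with
  | inl i => if val i == 0 then GridRect 0 q.+1 0 1 else GridRect q.+1 q.+2 1 q.+2
  | inr j => GridRect j j.+1 j.+1 j.+2
  end.

Lemma TRVG_K2q (q : nat) : TRVG (Kpq_rel 2 q).
Proof.
apply: (TRVG_of_grid (g := @K2q_grid q)).
  by move=> [[[|[|i]] ?] | [j ?]]; rewrite /grid_ok /=; lia.
move=> [[[|[|i]] ?] | [j ?]] [[[|[|i']] ?] | [j' ?]] //= ne;
  rewrite /grid_pair_ok /grid_xmeet /grid_ymeet /=; try lia.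
have {}ne : j != j' by apply: contraNneq ne => eq_j; apply/eqP; congr inr; exact: val_inj.
lia.
Qed.

Definition K34_grid (v : 'I_3 + 'I_4) : grid_rect :=
  match v with
  | inl i => nth (GridRect 0 0 0 0)
      [:: GridRect 0 1 1 4; GridRect 1 4 0 1; GridRect 4 6 4 6] i
  | inr j => nth (GridRect 0 0 0 0)
      [:: GridRect 0 2 5 6; GridRect 2 3 3 5; GridRect 3 5 2 3; GridRect 5 6 0 2] j
  end.

Lemma TRVG_K34 : TRVG (Kpq_rel 3 4).
Proof.
apply: (TRVG_of_grid (g := K34_grid)).
  by move=> [[[|[|[|?]]] ?] | [[|[|[|[|?]]]] ?]].
by move=> [[[|[|[|?]]] ?] | [[|[|[|[|?]]]] ?]] [[[|[|[|?]]] ?] | [[|[|[|[|?]]]] ?]].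
Qed.

Theorem theorem3 (p q : nat) :
  0 < p -> p <= q ->
  (TRVG (Kpq_rel p q) <->
   (p <= 2 \/ (p = 3 /\ q = 3) \/ (p = 3 /\ q = 4))).
Proof.
move=> p_gt0 le_pq; split.
- move=> /(TRVG_Kpq_bound p_gt0) bound.
  have [le_p2 | lt2p] := leqP p 2; first by left.
  have p3 : p = 3 by nia.
  by right; subst p; lia.
- case=> [le_p2 | [[-> ->] | [-> ->]]].
  + exact: TRVG_Kpq_le le_p2 (leqnn q) (TRVG_K2q q).
  + exact: TRVG_Kpq_le TRVG_K34.
  + exact: TRVG_K34.
Qed.
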